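(* Let $L$ be a complex Leibniz algebra, let $I$ be the ideal generated by all squares $[x,x]$, $x\in L$, and suppose $L/I\cong\mathfrak{e}(2)$ and $I$, as a right $\mathfrak{e}(2)$-module via $(i,x+I)\mapsto[i,x]$, is isomorphic to the three-dimensional module with basis $X_1,X_2,X_3$ and action $(X_1,p_-)=-X_3$, $(X_2,p_+)=X_3$, $(X_1,l)=-X_1$, $(X_2,l)=X_2$ (all other products zero). Then there exist $\alpha_1,\alpha_2\in\mathbb C$ and a basis $\{l,p_+,p_-,X_1,X_2,X_3\}$ of $L$ (with $X_i\in I$) in which the only nonzero products are $[l,p_+]=p_+$, $[p_+,l]=-p_+$, $[l,p_-]=-p_-$, $[p_-,l]=p_-$, $[l,l]=\alpha_1X_3$, $[p_+,p_-]=\alpha_2X_3$, $[p_-,p_+]=-\alpha_2X_3$, $[X_1,p_-]=-X_3$, $[X_1,l]=-X_1$, $[X_2,p_+]=X_3$, $[X_2,l]=X_2$. (The algebra with this table is denoted $K_2(\alpha_1,\alpha_2)$.)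
   Context: A (right) Leibniz algebra is a vector space $L$ with a bilinear bracket satisfying $[[x,y],z]=[[x,z],y]+[x,[y,z]]$. The ideal $I$ generated by squares satisfies $[L,I]=0$, so $L/I$ is a Lie algebra and $I$ is a right $L/I$-module via $(i,x+I)\mapsto[i,x]$. $\mathfrak{e}(2)$ is the complex Lie algebra with basis $\{l,p_+,p_-\}$ and brackets $[l,p_+]=p_+$, $[l,p_-]=-p_-$, $[p_+,p_-]=0$. *)

From mathcomp Require Import all_boot all_algebra all_field.
From mathcomp Require Import complex.
From mathcomp Require Import reals Rstruct.

Set Implicit Arguments.
Unset Strict Implicit.
Unset Printing Implicit Defensive.
Import GRing.Theory.
Local Open Scope ring_scope.

Definition CC : fieldType := (Rdefinitions.R)[i].

Section Leibniz.
Variable L : lmodType CC.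
Variable br : L -> L -> L.

Definition bilinear_br : Prop :=
  (forall (a : CC) x y z, br (a *: x + y) z = a *: br x z + br y z) /\
  (forall (a : CC) x y z, br x (a *: y + z) = a *: br x y + br x z).

Definition right_leibniz : Prop :=
  forall x y z, br (br x y) z = br (br x z) y + br x (br y z).

Definition is_leibniz_algebra : Prop := bilinear_br /\ right_leibniz.

Definition is_ideal (J : L -> Prop) : Prop :=
  [/\ J 0, (forall (a : CC) x y, J x -> J y -> J (a *: x + y)),
      (forall x y, J x -> J (br x y)) & (forall x y, J x -> J (br y x))].

Definition squares_ideal (v : L) : Prop :=
  forall J : L -> Prop, is_ideal J -> (forall x, J (br x x)) -> J v.
End Leibniz.

(* The Lie algebra e(2), realized on 'rV[CC]_3 with coordinates in the
   basis (l, p_+, p_-) = (0, 1, 2). *)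
Definition e2_l : 'rV[CC]_3 := \row_j (if j == 0 :> nat then 1 else 0).
Definition e2_pp : 'rV[CC]_3 := \row_j (if j == 1 :> nat then 1 else 0).
Definition e2_pm : 'rV[CC]_3 := \row_j (if j == 2 :> nat then 1 else 0).

Definition co (u : 'rV[CC]_3) (k : nat) : CC := u 0 (inord k).

(* [u,v] with [l,p_+] = p_+, [l,p_-] = -p_-, [p_+,p_-] = 0 (antisymmetric) *)
Definition e2_br (u v : 'rV[CC]_3) : 'rV[CC]_3 :=
  (co u 0 * co v 1 - co u 1 * co v 0) *: e2_pp
  - (co u 0 * co v 2 - co u 2 * co v 0) *: e2_pm.

(* The 3-dimensional right e(2)-module with basis X1, X2, X3
   (coordinates 0, 1, 2 in 'rV[CC]_3):
   (X1,p_-) = -X3, (X2,p_+) = X3, (X1,l) = -X1, (X2,l) = X2, others 0. *)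
Definition mod_act (v u : 'rV[CC]_3) : 'rV[CC]_3 :=
  (- (co v 0 * co u 0)) *: e2_l + (co v 1 * co u 0) *: e2_pp
  + (co v 1 * co u 1 - co v 0 * co u 2) *: e2_pm.

(* multiplication table of K_2(a1,a2) in the ordered basis
   b 0 = l, b 1 = p_+, b 2 = p_-, b 3 = X1, b 4 = X2, b 5 = X3 *)
Definition K2_table (L : lmodType CC) (a1 a2 : CC) (b : 'I_6 -> L)
  (i j : 'I_6) : L :=
  match nat_of_ord i, nat_of_ord j with
  | 0, 1 => b (inord 1)
  | 1, 0 => - b (inord 1)
  | 0, 2 => - b (inord 2)
  | 2, 0 => b (inord 2)
  | 0, 0 => a1 *: b (inord 5)
  | 1, 2 => a2 *: b (inord 5)
  | 2, 1 => - (a2 *: b (inord 5))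
  | 3, 2 => - b (inord 5)
  | 3, 0 => - b (inord 3)
  | 4, 1 => b (inord 5)
  | 4, 0 => b (inord 4)
  | _, _ => 0
  end.

(* Lift the basis l, p_+, p_- of L/I = e(2) to L.  Since [L, I] = 0, a bracket
   [x, y] only depends on y modulo I; hence p_+ := [l, p_+'] and
   p_- := -[l, p_-'] are eigenvectors of [l, _] for any lifts p_+', p_-', and
   correcting a lift of l by an element of I moves [l, l] into C X3, the kernel
   of the action of l on I.  Every other bracket is then forced by the Leibniz
   identity: [[l, l], y] = 0 gives [p_+, l] = -p_+ and [p_-, l] = p_-, while
   [p_+, p_+], [p_-, p_-] and [p_+, p_-] lie in I and are eigenvectors of
   right multiplication by l for the eigenvalues -2, 2 and 0.  On I this
   operator has eigenvalues -1, 1, 0 with kernel C X3 (here char 0 is used). *)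

From mathcomp Require Import all_boot all_algebra all_field.
From mathcomp Require Import complex ring.
From mathcomp Require Import reals Rstruct.
Set Implicit Arguments.
Unset Strict Implicit.
Unset Printing Implicit Defensive.
Local Open Scope ring_scope.
Import GRing.Theory Num.Theory.

Lemma basis_cat_lift (K : fieldType) (U V : vectType K) (f : 'Hom(U, V))
    (s t : seq U) :
  basis_of fullv (map f s) -> basis_of (lker f) t -> basis_of fullv (s ++ t).
Proof.
move=> /andP[/eqP span_fs /eqnP free_fs] /andP[/eqP span_t /eqnP free_t].
have img_f : limg f = fullv.
  by apply/eqP; rewrite eqEsubv subvf -span_fs -limg_span limgS ?subvf.
rewrite basisEdim size_cat; apply/andP; split.
  apply/subvP => x _; have : f x \in <<map f s>>%VS by rewrite span_fs memvf.
  rewrite -limg_span => /memv_imgP[y s_y fxy].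
  rewrite -(addrNK y x) addrC span_cat memv_add // span_t memv_ker linearB /=.
  by rewrite fxy subrr.
rewrite -(size_map f) -free_fs -free_t span_fs span_t -img_f.
by rewrite -(limg_ker_dim f fullv) capfv addnC.
Qed.

(* CC is declared as a bare fieldType; char 0 comes from the numeric structure
   of R[i]. *)
Lemma CC_intr_eq0 (k : int) : (k%:~R == 0 :> CC) = (k == 0).
Proof. exact: (@intr_eq0 (Rdefinitions.R)[i]). Qed.

Lemma CC_intr_scale_eq0 (k m : int) (a : CC) :
  k != m -> k%:~R * a = m%:~R * a -> a = 0.
Proof.
move=> neq_km /eqP; rewrite -subr_eq0 -mulrBl -intrB mulf_eq0 CC_intr_eq0.
by rewrite subr_eq0 (negbTE neq_km) => /eqP.
Qed.

Lemma coD u v k : co (u + v) k = co u k + co v k. Proof. by rewrite /co mxE. Qed.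
Lemma coZ a u k : co (a *: u) k = a * co u k. Proof. by rewrite /co mxE. Qed.
Lemma coN u k : co (- u) k = - co u k. Proof. by rewrite /co mxE. Qed.
Lemma co0 k : co 0 k = 0. Proof. by rewrite /co mxE. Qed.
Lemma co_e2_l k : (k < 3)%N -> co e2_l k = if k == 0 then 1 else 0.
Proof. by move=> ?; rewrite /co mxE inordK. Qed.
Lemma co_e2_pp k : (k < 3)%N -> co e2_pp k = if k == 1 then 1 else 0.
Proof. by move=> ?; rewrite /co mxE inordK. Qed.
Lemma co_e2_pm k : (k < 3)%N -> co e2_pm k = if k == 2 then 1 else 0.
Proof. by move=> ?; rewrite /co mxE inordK. Qed.

Definition coE := (coD, coZ, coN, co0, co_e2_l, co_e2_pp, co_e2_pm).

Lemma row3P (u v : 'rV[CC]_3) :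
  co u 0 = co v 0 -> co u 1 = co v 1 -> co u 2 = co v 2 -> u = v.
Proof.
move=> eq0 eq1 eq2; apply/rowP => -[[|[|[|//]]] lt_j3];
  [move: eq0 | move: eq1 | move: eq2]; rewrite /co;
  by congr (_ = _); congr (_ _ _); apply/val_inj; rewrite /= inordK.
Qed.

Ltac row3_ring := apply: row3P; rewrite /mod_act /e2_br ?coE //=; ring.

Ltac co_simpl := rewrite ?coE //= ?(mulr1, mulr0, addr0, add0r, oppr0).

Lemma row3E u : u = co u 0 *: e2_l + co u 1 *: e2_pp + co u 2 *: e2_pm.
Proof. row3_ring. Qed.

Lemma e2_basis : basis_of fullv [:: e2_l; e2_pp; e2_pm].
Proof.
rewrite basisEdim dimvf /dim /= mul1n leqnn andbT.
apply/subvP => u _; rewrite (row3E u).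
by rewrite !memvD ?memvZ ?memv_span // !inE eqxx ?orbT.
Qed.

Lemma e2_br_diag u : e2_br u u = 0. Proof. row3_ring. Qed.
Lemma e2_br_l_pp : e2_br e2_l e2_pp = e2_pp. Proof. row3_ring. Qed.
Lemma e2_br_l_pm : e2_br e2_l e2_pm = - e2_pm. Proof. row3_ring. Qed.
Lemma e2_br_pp_pm : e2_br e2_pp e2_pm = 0. Proof. row3_ring. Qed.

Local Notation X1 := e2_l (only parsing).
Local Notation X2 := e2_pp (only parsing).
Local Notation X3 := e2_pm (only parsing).

Lemma mod_act_X3 u : mod_act X3 u = 0. Proof. row3_ring. Qed.

Lemma mod_act_l w : mod_act w e2_l = - co w 0 *: X1 + co w 1 *: X2.
Proof. row3_ring. Qed.

Lemma mod_act_l_eq0 w : mod_act w e2_l = 0 -> w = co w 2 *: X3.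
Proof.
rewrite mod_act_l => act0.
move: (congr1 (co^~ 0) act0) (congr1 (co^~ 1) act0) => /=; co_simpl.
move=> /eqP; rewrite oppr_eq0 => /eqP w0 w1.
by rewrite {1}(row3E w) w0 w1 !scale0r !add0r.
Qed.

Lemma mod_act_l_eq_scale w (k : int) :
  k \notin [:: -1; 0; 1] -> mod_act w e2_l = k%:~R *: w -> w = 0.
Proof.
rewrite !inE => /norP[k_neqN1 /norP[k_neq0 k_neq1]]; rewrite mod_act_l => act_k.
move: (congr1 (co^~ 0) act_k) (congr1 (co^~ 1) act_k) (congr1 (co^~ 2) act_k) => /=.
co_simpl => e0 e1 e2.
have w0 : co w 0 = 0.
  by apply: (@CC_intr_scale_eq0 k (-1) _ k_neqN1); rewrite -e0 mulN1r.
have w1 : co w 1 = 0.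
  by apply: (@CC_intr_scale_eq0 k 1 _ k_neq1); rewrite -e1 mul1r.
have w2 : co w 2 = 0.
  by apply: (@CC_intr_scale_eq0 k 0 _ k_neq0); rewrite -e2 mul0r.
by rewrite (row3E w) w0 w1 w2 !scale0r !addr0.
Qed.

Section LeibnizAlgebra.
Variables (L : lmodType CC) (br : L -> L -> L).
Hypothesis brL : is_leibniz_algebra br.

Lemma brDl x y z : br (x + y) z = br x z + br y z.
Proof. by have := brL.1.1 1 x y z; rewrite !scale1r. Qed.
Lemma brDr x y z : br x (y + z) = br x y + br x z.
Proof. by have := brL.1.2 1 x y z; rewrite !scale1r. Qed.
Lemma br0l z : br 0 z = 0.
Proof. by have := brL.1.1 (-1) z z z; rewrite !scaleN1r !addNr. Qed.
Lemma br0r x : br x 0 = 0.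
Proof. by have := brL.1.2 (-1) x x x; rewrite !scaleN1r !addNr. Qed.
Lemma brZl a x z : br (a *: x) z = a *: br x z.
Proof. by have := brL.1.1 a x 0 z; rewrite !addr0 br0l addr0. Qed.
Lemma brZr a x y : br x (a *: y) = a *: br x y.
Proof. by have := brL.1.2 a x y 0; rewrite !addr0 br0r addr0. Qed.
Lemma brNl x z : br (- x) z = - br x z.
Proof. by rewrite -scaleN1r brZl scaleN1r. Qed.
Lemma brNr x y : br x (- y) = - br x y.
Proof. by rewrite -scaleN1r brZr scaleN1r. Qed.

Lemma br_squares_ideal x z : squares_ideal br z -> br x z = 0.
Proof.
have leib := brL.2; move=> Iz; move: x.
apply: (Iz (fun z => forall x, br x z = 0)).
  split=> [x | a y z' y0 z0 x | y z' y0 x | y z' y0 x].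
  - by rewrite br0r.
  - by rewrite brDr brZr y0 z0 scaler0 addr0.
  - by have := leib x y z'; rewrite !y0 br0l add0r.
  - by rewrite y0 br0r.
by move=> y x; apply: (addrI (br (br x y) y)); rewrite -leib addr0.
Qed.

End LeibnizAlgebra.

Section K2Classification.
Variables (L : vectType CC) (br : L -> L -> L).
Variables (pi : {linear L -> 'rV[CC]_3}) (phi : {linear 'rV[CC]_3 -> L}).
Hypotheses (brL : is_leibniz_algebra br)
  (pi_surj : forall u, exists x, pi x = u)
  (ker_pi : forall x, pi x = 0 <-> squares_ideal br x)
  (pi_br : forall x y, pi (br x y) = e2_br (pi x) (pi y))
  (phi_inj : injective phi)
  (img_phi : forall x, squares_ideal br x <-> exists v, phi v = x)
  (br_phil : forall v y, br (phi v) y = phi (mod_act v (pi y))).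

Let brDl := brDl brL.
Let brDr := brDr brL.
Let brNl := brNl brL.
Let brNr := brNr brL.
Let brZl := brZl brL.
Let leib := brL.2.

Lemma pi_phi v : pi (phi v) = 0.
Proof. by apply/ker_pi/img_phi; exists v. Qed.

Lemma ker_pi_phi x : pi x = 0 -> exists v, phi v = x.
Proof. by move/ker_pi/img_phi. Qed.

Lemma br_kerr x y : pi y = 0 -> br x y = 0.
Proof. by move/ker_pi; apply: br_squares_ideal. Qed.

Lemma br_phir x v : br x (phi v) = 0.
Proof. exact/br_kerr/pi_phi. Qed.

Lemma br_pi_eqr x y z : pi y = pi z -> br x y = br x z.
Proof.
move=> /eqP; rewrite -subr_eq0 -linearB => /eqP pi_yz.
by rewrite -(subrK z y) brDr br_kerr ?add0r.
Qed.

Lemma lker_pi : lker (linfun pi) = limg (linfun phi).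
Proof.
apply/vspaceP => x; rewrite memv_ker lfunE /=; apply/eqP/memv_imgP.
  by move=> /ker_pi_phi[v <-]; exists v; rewrite ?memvf ?lfunE.
by move=> [v _ ->]; rewrite lfunE pi_phi.
Qed.

Lemma exists_lift_l : exists l (a1 : CC), pi l = e2_l /\ br l l = a1 *: phi X3.
Proof.
have [l0 pi_l0] := pi_surj e2_l.
have [v phi_v] : exists v, phi v = br l0 l0.
  by apply: ker_pi_phi; rewrite pi_br pi_l0 e2_br_diag.
pose a := co v 0 *: X1 - co v 1 *: X2.
exists (l0 + phi a), (co v 2); split; first by rewrite linearD /= pi_phi addr0.
rewrite brDr br_phir addr0 brDl br_phil pi_l0 -phi_v -linearD -linearZ.
by congr (phi _); row3_ring.
Qed.

Section Lifts.
Variables (l : L) (a1 : CC).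
Hypotheses (pi_l : pi l = e2_l) (br_ll : br l l = a1 *: phi X3).

Lemma exists_lift_pp : exists p, pi p = e2_pp /\ br l p = p.
Proof.
have [p0 pi_p0] := pi_surj e2_pp.
have pi_lp0 : pi (br l p0) = e2_pp by rewrite pi_br pi_l pi_p0 e2_br_l_pp.
by exists (br l p0); split; last by apply: br_pi_eqr; rewrite pi_lp0.
Qed.

Lemma exists_lift_pm : exists m, pi m = e2_pm /\ br l m = - m.
Proof.
have [m0 pi_m0] := pi_surj e2_pm.
have pi_lm0 : pi (br l m0) = - e2_pm by rewrite pi_br pi_l pi_m0 e2_br_l_pm.
exists (- br l m0); rewrite linearN /= pi_lm0 opprK; split=> //.
by rewrite opprK brNr (@br_pi_eqr _ _ (- m0)) ?brNr ?opprK // linearN /= pi_lm0 pi_m0.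
Qed.

Lemma br_brl_l y : br (br l y) l = - br l (br l y).
Proof.
apply/eqP; rewrite -addr_eq0 -leib br_ll brZl br_phil mod_act_X3.
by rewrite linear0 scaler0.
Qed.

Lemma ker_br_l_eq_scale x (k : int) :
  k \notin [:: -1; 0; 1] -> pi x = 0 -> br x l = k%:~R *: x -> x = 0.
Proof.
move=> k_notin /ker_pi_phi[w <-]; rewrite br_phil pi_l -linearZ => /phi_inj.
by move/(mod_act_l_eq_scale k_notin) ->; rewrite linear0.
Qed.

Lemma ker_br_l_eq0 x : pi x = 0 -> br x l = 0 -> exists a, x = a *: phi X3.
Proof.
move=> /ker_pi_phi[w <-]; rewrite br_phil pi_l -(linear0 phi) => /phi_inj.
by move/mod_act_l_eq0 ->; exists (co w 2); rewrite linearZ.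
Qed.

Section Brackets.
Variables p m : L.
Hypotheses (pi_p : pi p = e2_pp) (br_lp : br l p = p).
Hypotheses (pi_m : pi m = e2_pm) (br_lm : br l m = - m).

Lemma br_pl : br p l = - p.
Proof. by have := br_brl_l p; rewrite !br_lp. Qed.

Lemma br_ml : br m l = m.
Proof. by have := br_brl_l m; rewrite !br_lm brNl brNr br_lm opprK => /oppr_inj. Qed.

Lemma br_pp : br p p = 0.
Proof.
apply: (@ker_br_l_eq_scale _ (-2)) => //; first by rewrite pi_br pi_p e2_br_diag.
have := leib p l p; rewrite br_pl br_lp brNl => /esym/(canRL (addrK _)) ->.
by rewrite scaleNr scaler_nat mulr2n opprD.
Qed.

Lemma br_mm : br m m = 0.
Proof.
apply: (@ker_br_l_eq_scale _ 2) => //; first by rewrite pi_br pi_m e2_br_diag.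
have := leib m l m; rewrite br_ml br_lm brNr => /esym/(canRL (subrK _)) ->.
by rewrite scaler_nat mulr2n.
Qed.

Lemma exists_br_pm : exists a2, br p m = a2 *: phi X3.
Proof.
apply: ker_br_l_eq0; first by rewrite pi_br pi_p pi_m e2_br_pp_pm.
have := leib p l m; rewrite br_pl br_lm brNl brNr => /esym/(canRL (subrK _)).
by rewrite addNr.
Qed.

Lemma br_mp : br m p = - br p m.
Proof.
have := leib l p m; rewrite br_lp br_lm brNl (@br_kerr _ (br p m)).
  by rewrite addr0 => ->; rewrite opprK.
by rewrite pi_br pi_p pi_m e2_br_pp_pm.
Qed.

Lemma K2_basis : basis_of fullv [:: l; p; m; phi X1; phi X2; phi X3].
Proof.
have -> : [:: l; p; m; phi X1; phi X2; phi X3] =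
    [:: l; p; m] ++ map (linfun phi) [:: X1; X2; X3] by rewrite /= !lfunE.
apply: (basis_cat_lift (f := linfun pi)).
  by rewrite /= !lfunE /= pi_l pi_p pi_m e2_basis.
rewrite lker_pi; apply: limg_basis_of e2_basis.
by rewrite capfv; apply/eqP/lker0P => x y; rewrite !lfunE; apply: phi_inj.
Qed.

Lemma K2_table_spec a2 : br p m = a2 *: phi X3 ->
  let b := [tuple l; p; m; phi X1; phi X2; phi X3] in
  forall i j : 'I_6, br (tnth b i) (tnth b j) = K2_table a1 a2 (tnth b) i j.
Proof.
move=> br_pm b [[|[|[|[|[|[|//]]]]]] lt_i6] [[|[|[|[|[|[|//]]]]]] lt_j6].
all: rewrite /K2_table !(tnth_nth 0) /= ?inordK //=.
all: rewrite ?br_ll ?br_lp ?br_lm ?br_pl ?br_ml ?br_pp ?br_mm ?br_mp ?br_pm ?br_phir //.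
all: rewrite br_phil ?pi_l ?pi_p ?pi_m ?pi_phi -?linearN -?(linear0 phi).
all: by congr (phi _); row3_ring.
Qed.

End Brackets.
End Lifts.

Lemma K2_structure : exists (a1 a2 : CC) (b : 6.-tuple L),
  basis_of fullv b /\
  squares_ideal br (tnth b (inord 3)) /\
  squares_ideal br (tnth b (inord 4)) /\
  squares_ideal br (tnth b (inord 5)) /\
  forall i j : 'I_6, br (tnth b i) (tnth b j) = K2_table a1 a2 (tnth b) i j.
Proof.
have [l [a1 [pi_l br_ll]]] := exists_lift_l.
have [p [pi_p br_lp]] := exists_lift_pp pi_l.
have [m [pi_m br_lm]] := exists_lift_pm pi_l.
have [a2 br_pm] := exists_br_pm pi_l br_ll pi_p br_lp pi_m br_lm.
exists a1, a2, [tuple l; p; m; phi X1; phi X2; phi X3].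
split; first exact (K2_basis pi_l pi_p pi_m).
do 3 (split; first by rewrite (tnth_nth 0) inordK //; apply/img_phi; eexists).
exact (K2_table_spec pi_l br_ll pi_p br_lp pi_m br_lm br_pm).
Qed.

End K2Classification.

Theorem mainTheorem4 (L : vectType CC) (br : L -> L -> L) :
  is_leibniz_algebra br ->
  (* L / I ≅ e(2) via a surjective bracket-preserving linear map pi with
     kernel I, and I ≅ the given module via a linear bijection phi from the
     module onto I intertwining the action (i, x + I) |-> [i, x] *)
  (exists (pi : {linear L -> 'rV[CC]_3}) (phi : {linear 'rV[CC]_3 -> L}),
      (forall u, exists x, pi x = u) /\
          (forall x, pi x = 0 <-> squares_ideal br x) /\
          (forall x y, pi (br x y) = e2_br (pi x) (pi y)) /\
          injective phi /\
          (forall x, squares_ideal br x <-> exists v, phi v = x) /\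
          (forall v y, br (phi v) y = phi (mod_act v (pi y)))) ->
  exists (a1 a2 : CC) (b : 6.-tuple L),
    basis_of fullv b /\
    squares_ideal br (tnth b (inord 3)) /\
    squares_ideal br (tnth b (inord 4)) /\
    squares_ideal br (tnth b (inord 5)) /\
    forall i j : 'I_6, br (tnth b i) (tnth b j) = K2_table a1 a2 (tnth b) i j.
Proof.
move=> brL [pi [phi [pi_surj [ker_pi [pi_br [phi_inj [img_phi br_phil]]]]]]].
exact: (K2_structure brL pi_surj ker_pi pi_br phi_inj img_phi br_phil).
Qed.
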